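(* Let $l,m,k$ be non-negative integers with $2l\le m\le 2k$. Then $$S(k,m,l)=\binom{m}{l}\binom{2k-m+1}{k-m+l}+\sum_{d'=0}^{l-1}\binom{m}{d'}\left[\binom{2k-m+1}{k+1-d'}-\binom{2k-m+1}{k-d'}\right].$$
   Context: A Dyck path of semilength $k$ (Dyck $k$-path) is a lattice path in $\mathbb{Z}^2$ starting at $(0,0)$, ending at $(2k,0)$, never going below the $x$-axis, each of whose $2k$ steps is either a rise $(1,1)$ or a fall $(1,-1)$. For a Dyck $k$-path $D$ and non-negative integers $l\le m\le 2k$, $S(D,m,l)$ denotes the number of intervals of length $m$ in $D$ (i.e. blocks of $m$ consecutive steps of $D$, one for each starting position $s\in\{1,\dots,2k-m+1\}$) that contain exactly $l$ falls; and $S(k,m,l)=\sum_{D} S(D,m,l)$, the sum over all Dyck $k$-paths $D$. Convention: $\binom{x}{y}=0$ for integers $x\ge 0$ and $y<0$, and $\binom{x}{y}=0$ if $y>x\ge 0$. *)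

From mathcomp Require Import all_boot all_order all_algebra.
Set Implicit Arguments. Unset Strict Implicit. Unset Printing Implicit Defensive.
Import GRing.Theory Num.Theory.

(* A path is a sequence of steps: true = rise (1,1), false = fall (1,-1). *)

Definition is_dyck (s : seq bool) : bool :=
  all (fun i => count negb (take i s) <= count id (take i s)) (iota 0 (size s).+1)
  && (count negb s == count id s).

Definition S_path (D : seq bool) (m l : nat) : nat :=
  count (fun s => count negb (take m (drop s D)) == l) (iota 0 ((size D).+1 - m)).

Definition S_total (k m l : nat) : nat :=
  \sum_(D : (k.*2).-tuple bool | is_dyck D) S_path D m l.

(* Binomial with integer lower index: zero for negative lower index
   ('C(n, j) is already zero for j > n). *)
Definition binz (n : nat) (y : int) : int :=
  match y with Posz j => ('C(n, j))%:Z | Negz _ => 0 end.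

From mathcomp Require Import all_boot all_order all_algebra.
From mathcomp Require Import zify ring.
Import GRing.Theory Num.Theory.

(* Around a window of length m containing l falls, a Dyck path splits into a
   ballot walk 0 -> h (the prefix), a ballot walk h -> h + (m - 2l) (the
   window) and a ballot walk h + (m - 2l) -> 0 (the suffix).  Summed over the
   position of the window, the prefix-suffix pairs are, by a last-passage
   decomposition, the ballot walks 0 -> 2h + (m - 2l) + 1 of length
   2k - m + 1.  The reflection principle writes both counts as differences of
   binomials, and the sum over h telescopes. *)

Set Implicit Arguments. Unset Strict Implicit.

Fixpoint ballot (a : nat) (w : seq bool) (b : nat) : bool :=
  match w with
  | [::] => a == b
  | true :: w' => ballot a.+1 w' b
  | false :: w' => (0 < a) && ballot a.-1 w' b
  end.

Definition height (a : nat) (w : seq bool) : nat := a + count id w - count negb w.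

Lemma ballot_count a w b : ballot a w b -> a + count id w = b + count negb w.
Proof.
elim: w a => [|[] w IH] a /=; first by move/eqP->; rewrite !addn0.
  by move/IH; lia.
by case/andP=> a_gt0 /IH; lia.
Qed.

Lemma ballot_height a w b : ballot a w b -> b = height a w.
Proof. by move/ballot_count; rewrite /height; lia. Qed.

Lemma ballot_height_le a w b : ballot a w b -> b <= a + size w.
Proof. by move/ballot_count; rewrite -(count_predC id w); lia. Qed.

Lemma ballot_cat a x y b :
  ballot a (x ++ y) b = ballot a x (height a x) && ballot (height a x) y b.
Proof.
rewrite /height; elim: x a => [|[] x IH] a /=.
- by rewrite addn0 subn0 eqxx.
- by rewrite IH; congr (ballot _ _ _ && ballot _ _ _); lia.
- by case: a => [|a] //=; rewrite IH.
Qed.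

Lemma ballotP a w b :
  reflect ((forall i, count negb (take i w) <= a + count id (take i w)) /\
           a + count id w = b + count negb w)
          (ballot a w b).
Proof.
apply: (iffP idP).
- elim: w a => [|[] w IH] a /=.
  + by move/eqP->; split=> [i|]; rewrite ?take_nil.
  + case/IH=> below balance; split=> [[|i]|] //=; [have := below i|]; lia.
  + case/andP=> a_gt0 /IH[below balance]; split=> [[|i]|] //=; [have := below i|]; lia.
- elim: w a => [|[] w IH] a /= [below balance].
  + by apply/eqP; lia.
  + by apply: IH; split=> [i|]; [have := below i.+1 => /=|]; lia.
  + have a_gt0 : 0 < a by have := below 1; rewrite /= take0 /=; lia.
    by rewrite a_gt0 IH //; split=> [i|]; [have := below i.+1 => /=|]; lia.
Qed.

Lemma is_dyck_ballot w : is_dyck w = ballot 0 w 0.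
Proof.
apply/andP/ballotP => [[/allP below /eqP balance]|[below balance]].
- split=> [i|]; last lia.
  case: (leqP i (size w)) => [le_i|lt_i].
    by apply: below; rewrite mem_iota.
  rewrite take_oversize ?(ltnW lt_i) //.
  by have := below (size w); rewrite mem_iota take_size leqnn => /(_ isT); lia.
- by split; [apply/allP => i _; apply: below | apply/eqP; lia].
Qed.

Fixpoint words (n : nat) : seq (seq bool) :=
  if n is n'.+1 then map (cons true) (words n') ++ map (cons false) (words n')
  else [:: [::]].

Lemma mem_map_cons (b c : bool) (s : seq (seq bool)) w :
  (c :: w \in map (cons b) s) = (c == b) && (w \in s).
Proof.
by apply/mapP/andP => [[v vs [-> ->]]|[/eqP-> ws]]; [rewrite eqxx | exists w].
Qed.

Lemma mem_words n w : (w \in words n) = (size w == n).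
Proof.
elim: n w => [|n IH] [|b w] /=; rewrite ?inE //.
  by rewrite mem_cat; apply/negbTE/norP; split; apply/mapP => -[].
by rewrite mem_cat !mem_map_cons IH eqSS; case: b; rewrite /= ?orbF.
Qed.

Lemma words_uniq n : uniq (words n).
Proof.
have cons_inj (b : bool) : injective (cons b) by move=> ? ? [].
elim: n => [|n IH] //=; rewrite cat_uniq !map_inj_uniq // IH /= andbT.
by apply/hasPn => _ /mapP[w _ ->]; rewrite mem_map_cons.
Qed.

Lemma big_tuple_words n (P : pred (seq bool)) (F : seq bool -> nat) :
  \sum_(w : n.-tuple bool | P w) F w = \sum_(w <- words n | P w) F w.
Proof.
have enum_words : perm_eq (map val (enum {: n.-tuple bool})) (words n).
  apply: uniq_perm; first by rewrite map_inj_uniq ?enum_uniq //; exact: val_inj.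
    exact: words_uniq.
  move=> w; rewrite mem_words; apply/mapP/eqP => [[t _ ->]|size_w]; first exact: size_tuple.
  by exists (Tuple (introT eqP size_w)); rewrite ?mem_enum.
by rewrite -(perm_big _ enum_words) big_map big_enum_cond.
Qed.

Lemma big_words_add p q (F : seq bool -> nat) :
  \sum_(w <- words (p + q)) F w = \sum_(x <- words p) \sum_(y <- words q) F (x ++ y).
Proof.
elim: p F => [|p IH] F /=; first by rewrite big_seq1.
by rewrite !big_cat !big_map !IH.
Qed.

Definition nballot (n a b : nat) : nat := \sum_(w <- words n) ballot a w b.

Lemma nballot0 a b : nballot 0 a b = (a == b).
Proof. by rewrite /nballot big_seq1. Qed.

Lemma nballotS n a b :
  nballot n.+1 a b = nballot n a.+1 b + (if 0 < a then nballot n a.-1 b else 0).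
Proof.
rewrite /nballot big_cat !big_map; congr (_ + _).
by case: a => [|a] //=; rewrite big1.
Qed.

Lemma nballot_odd n a b : odd (a + n + b) -> nballot n a b = 0.
Proof.
move=> odd_anb; rewrite /nballot big_seq big1 // => w; rewrite mem_words => /eqP size_w.
case: (boolP (ballot a w b)) => // /ballot_count ab_w.
have nw : count id w + count negb w = n by rewrite -size_w; exact: count_predC.
have even_anb : a + n + b = (b + count negb w).*2 by lia.
by rewrite even_anb odd_double in odd_anb.
Qed.

Local Open Scope ring_scope.

Lemma binz_neg n (y : int) : y < 0 -> binz n y = 0.
Proof. by case: y. Qed.

Lemma binz_gt n (y : int) : n%:Z < y -> binz n y = 0.
Proof. by case: y => // j lt_nj; rewrite /= bin_small //; lia. Qed.

Lemma binzS n (y : int) : binz n.+1 y = binz n y + binz n (y - 1).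
Proof.
case: y => [[|j]|j] /=.
- by rewrite !bin0 addr0.
- by rewrite binS PoszD subn1.
- by rewrite addr0.
Qed.

Lemma binz_sym n (y : int) : binz n y = binz n (n%:Z - y).
Proof.
case: y => [j|j]; last by rewrite [RHS]binz_gt //; lia.
have [le_jn|lt_nj] := leqP j n; last by rewrite binz_gt ?binz_neg //; lia.
by rewrite (_ : n%:Z - j%:Z = (n - j)%N%:Z) /= ?bin_sub //; lia.
Qed.

(* [f] is the number of down-steps; the subtracted term counts, by reflection,
   the walks that reach height -1. *)
Lemma nballot_reflection n a b (f : int) : a%:Z + n%:Z = b%:Z + 2 * f ->
  (nballot n a b)%:Z = binz n f - binz n (f - a%:Z - 1).
Proof.
elim: n a b f => [|n IH] a b f anbf.
  rewrite nballot0 [binz 0 (f - _ - 1)]binz_neg ?subr0; last lia.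
  case: f anbf => [[|j]|j] anbf /=.
  - by rewrite (_ : a = b) ?eqxx //; lia.
  - by rewrite (_ : a == b = false) //; apply/eqP; lia.
  - by rewrite (_ : a == b = false) //; apply/eqP; lia.
rewrite nballotS PoszD (IH a.+1 b f); last lia.
case: a anbf => [|a] anbf /=; rewrite !binzS.
  have -> : f - 0%:Z - 1 - 1 = f - 1%:Z - 1 by lia.
  have -> : f - 0%:Z - 1 = f - 1 by lia.
  ring.
rewrite (IH a b (f - 1)); last lia.
have -> : f - a.+1%:Z - 1 - 1 = f - a.+2%:Z - 1 by lia.
have -> : f - 1 - a%:Z - 1 = f - a.+1%:Z - 1 by lia.
ring.
Qed.

Lemma nballotC n a b : nballot n a b = nballot n b a.
Proof.
have [odd_anb|even_anb] := boolP (odd (a + n + b)).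
  by rewrite !nballot_odd // addnC (addnC b) addnA.
have [g anb_g] : exists g, a + n + b = g.*2.
  by exists (a + n + b)./2; rewrite -[LHS]odd_double_half (negPf even_anb).
apply/eqP; rewrite -eqz_nat; apply/eqP.
rewrite (nballot_reflection (f := g%:Z - b%:Z)); last lia.
rewrite (nballot_reflection (f := g%:Z - a%:Z)); last lia.
by rewrite [binz n (g%:Z - a%:Z)]binz_sym; congr (binz n _ - binz n _); lia.
Qed.

Local Close Scope ring_scope.

(* A ballot walk a -> h + e + 1 either stays above h, and is then counted by
   [nballot_above], or splits at its last visit to h into a walk a -> h, an
   up-step, and a walk staying above h which, reversed and lowered by h + 1,
   is a ballot walk e -> 0. *)
Definition nballot_split_sum (n a h e : nat) : nat :=
  \sum_(s < n) nballot s a h * nballot (n - s.+1) e 0.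

Definition nballot_above (n a h e : nat) : nat :=
  if h < a then nballot n (a - h.+1) e else 0.

Lemma nballot_split_sumS n a h e :
  nballot_split_sum n.+1 a h e = (a == h) * nballot n e 0 + nballot_split_sum n a.+1 h e
    + (if 0 < a then nballot_split_sum n a.-1 h e else 0).
Proof.
rewrite /nballot_split_sum big_ord_recl nballot0 subn1 -addnA; congr (_ + _).
under eq_bigr => s _ do rewrite lift0 subSS nballotS mulnDl.
by rewrite big_split; case: a => [|a] //=; rewrite [\sum_(s < n) 0 * _]big1.
Qed.

Lemma nballot_aboveS n a h e :
  (a == h) * nballot n e 0 + nballot_above n.+1 a h e
    = nballot_above n a.+1 h e + (if 0 < a then nballot_above n a.-1 h e else 0).
Proof.
rewrite /nballot_above subSS; case: (ltngtP h a) => [lt_ha|lt_ah|<-].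
- case: a lt_ha => [|a] //= lt_ha.
  by rewrite subSS ltnS (ltnW lt_ha) nballotS subn_gt0 -subnS -subSn.
- rewrite ltnS leqNgt lt_ah; case: a lt_ah => [|a] //= lt_ah.
  by rewrite ifN //; lia.
- rewrite ltnSn subnn nballotC mul1n; case: h => [|h] //=.
  by rewrite ifN ?addn0 //; lia.
Qed.

Lemma nballot_last_passage n a h e :
  nballot_split_sum n a h e + nballot_above n a h e = nballot n a (h + e).+1.
Proof.
elim: n a => [|n IH] a.
  rewrite /nballot_split_sum /nballot_above big_ord0 !nballot0.
  by case: ltnP => ?; case: (a =P _); try case: (_ =P e); lia.
rewrite nballotS -!IH nballot_split_sumS.
by have := nballot_aboveS n a h e; case: a => [|a] /=; lia.
Qed.

Lemma ballot_window m l a x B C : size B = m -> l.*2 <= m ->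
  ballot a (x ++ B ++ C) 0 && (count negb B == l) =
  [&& ballot a x (height a x),
      ballot (height a x) B (height a x + (m - l.*2))
    & ballot (height a x + (m - l.*2)) C 0].
Proof.
move=> <- le_lm; rewrite !ballot_cat; set h := height a x.
case: (ballot a x h) => //=.
have nB : count id B + count negb B = size B by exact: count_predC.
have [eq_l|neq_l] := eqP.
  by rewrite andbT; congr (ballot _ _ _ && ballot _ _ _); rewrite /height; lia.
rewrite andbF; symmetry; apply/negbTE/negP => /andP[/ballot_count]; lia.
Qed.

Lemma big_words_height s a H (G : nat -> nat) : a + s < H ->
  \sum_(w <- words s) ballot a w (height a w) * G (height a w)
    = \sum_(h < H) nballot s a h * G h.
Proof.
move=> lt_asH; under [RHS]eq_bigr => h _ do rewrite /nballot big_distrl.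
rewrite exchange_big; apply: eq_big_seq => w; rewrite mem_words => /eqP size_w.
have [ballot_w|] := boolP (ballot a w (height a w)); last first.
  move=> not_ballot; rewrite big1 // => h _; case: (boolP (ballot a w h)) => // ballot_h.
  by rewrite -(ballot_height ballot_h) ballot_h in not_ballot.
have lt_hH : height a w < H by have := ballot_height_le ballot_w; rewrite size_w; lia.
rewrite (bigD1 (Ordinal lt_hH)) //= ballot_w big1 ?addn0 // => h neq_h.
case: (boolP (ballot a w h)) => // /ballot_height eq_h.
by case/eqP: neq_h; apply: val_inj.
Qed.

Lemma sum_ballot_windows s m r l H : l.*2 <= m -> s < H ->
  \sum_(w <- words (s + (m + r))) (ballot 0 w 0 && (count negb (take m (drop s w)) == l))
    = \sum_(h < H) nballot s 0 h * (nballot m h (h + (m - l.*2)) * nballot r (h + (m - l.*2)) 0).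
Proof.
move=> le_lm lt_sH; set d := m - l.*2.
pose G h := nballot m h (h + d) * nballot r (h + d) 0.
rewrite big_words_add -(@big_words_height s 0 H G) //.
apply: eq_big_seq => x; rewrite mem_words => /eqP size_x.
rewrite /G big_words_add /nballot big_distrl big_distrr /=; apply: eq_big_seq => B.
rewrite mem_words => /eqP size_B; rewrite !big_distrr /=; apply: eq_bigr => C _.
rewrite drop_size_cat // take_size_cat // (@ballot_window m l) //.
by rewrite -!mulnb mulnA.
Qed.

Lemma S_path_windows w m l : S_path w m l =
  \sum_(s < (size w).+1 - m) (count negb (take m (drop s w)) == l).
Proof.
rewrite -(big_mkord xpredT (fun s => (count negb (take m (drop s w)) == l) : nat)).
by rewrite /S_path -sum1_count big_mkcond /index_iota subn0.
Qed.

Lemma S_total_heights k m l : l.*2 <= m -> m <= k.*2 ->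
  S_total k m l = \sum_(h < k.*2.+1)
    nballot m h (h + (m - l.*2)) * nballot (k.*2 - m).+1 0 (h + (h + (m - l.*2))).+1.
Proof.
move=> le_lm le_mk; set n := (k.*2 - m).+1; set d := m - l.*2.
pose window s w := ballot 0 w 0 && (count negb (take m (drop s w)) == l).
have -> : S_total k m l = \sum_(s < n) \sum_(w <- words k.*2) window s w.
  rewrite /S_total (@big_tuple_words _ is_dyck (fun w => S_path w m l)) big_mkcond exchange_big /=.
  apply: eq_big_seq => w; rewrite mem_words => /eqP size_w.
  rewrite is_dyck_ballot S_path_windows size_w (_ : k.*2.+1 - m = n); last lia.
  by rewrite /window; case: ballot => //=; rewrite big1.
have by_height (s : 'I_n) : \sum_(w <- words k.*2) window s w
    = \sum_(h < k.*2.+1) nballot s 0 h * (nballot m h (h + d) * nballot (n - s.+1) (h + d) 0).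
  have [len_w lt_s] : k.*2 = s + (m + (n - s.+1)) /\ s < k.*2.+1.
    by have := ltn_ord s; rewrite /n; lia.
  by rewrite {1}len_w (sum_ballot_windows _ le_lm lt_s).
under eq_bigr => s _ do rewrite by_height.
rewrite exchange_big; apply: eq_bigr => h _.
under eq_bigr => s _ do rewrite mulnCA.
rewrite -big_distrr; congr (_ * _).
by rewrite -(nballot_last_passage n 0 h (h + d)) addn0.
Qed.

Local Open Scope ring_scope.

Lemma sum_mulr_telescope (R : pzRingType) (H l : nat) (A : R) (B u : nat -> R) :
  (l <= H)%N -> (forall h, (l <= h)%N -> B h = 0) ->
  \sum_(h < H) (A - B h) * (u h - u h.+1)
    = A * (u 0%N - u H) - \sum_(d < l) B (l - d.+1)%N * (u (l - d.+1)%N - u (l - d)%N).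
Proof.
move=> le_lH B_gt; under eq_bigr do rewrite mulrBl; rewrite sumrB -mulr_sumr.
have -> : \sum_(h < H) (u h - u h.+1) = u 0%N - u H.
  rewrite -opprB -(telescope_sumr _ (leq0n H)) big_mkord -sumrN.
  by apply: eq_bigr => h _; rewrite opprB.
congr (_ - _); rewrite -(subnKC le_lH) big_split_ord /=.
rewrite [X in _ + X]big1 => [|h _]; last by rewrite B_gt ?leq_addr // mul0r.
rewrite addr0 (reindex_inj rev_ord_inj) /=.
by apply: eq_bigr => d _; rewrite subnSK.
Qed.

Lemma nballot_window_binz m l h : (l.*2 <= m)%N ->
  (nballot m h (h + (m - l.*2)))%:Z = binz m l%:Z - binz m (l%:Z - h%:Z - 1).
Proof. by move=> le_lm; rewrite (nballot_reflection (f := l%:Z)); lia. Qed.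

Theorem mainTheorem2 (l m k : nat) (h1 : (l.*2 <= m)%N) (h2 : (m <= k.*2)%N) :
  (S_total k m l)%:Z =
    binz m l%:Z * binz (k.*2 - m + 1) (k%:Z - m%:Z + l%:Z)
    + \sum_(d' < l) binz m d'%:Z *
        (binz (k.*2 - m + 1) (k%:Z + 1 - d'%:Z) - binz (k.*2 - m + 1) (k%:Z - d'%:Z)).
Proof.
rewrite S_total_heights // -natz natr_sum addn1.
set n := (k.*2 - m).+1; set r := k%:Z - m%:Z + l%:Z.
have suffix_binz (h : nat) :
    (nballot n 0 (h + (h + (m - l.*2))).+1)%:Z = binz n (r - h%:Z) - binz n (r - h.+1%:Z).
  by rewrite (nballot_reflection (f := r - h%:Z)); [congr (_ - binz n _)|]; rewrite /n /r; lia.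
under eq_bigr => h _ do rewrite natrM !natz nballot_window_binz // suffix_binz.
rewrite (@sum_mulr_telescope _ _ l _ (fun h => binz m (l%:Z - h%:Z - 1))
                             (fun h => binz n (r - h%:Z))); first last.
- by move=> h le_lh; rewrite binz_neg //; lia.
- by lia.
rewrite [binz n (r - k.*2.+1%:Z)]binz_neg ?subr0; last by rewrite /r; lia.
rewrite -sumrN; congr (_ + _); apply: eq_bigr => d _; have lt_dl := ltn_ord d.
rewrite (_ : l%:Z - (l - d.+1)%N%:Z - 1 = d%:Z); last lia.
rewrite [binz n (r - (l - d.+1)%N%:Z)]binz_sym [binz n (r - (l - d)%N%:Z)]binz_sym.
rewrite (_ : n%:Z - (r - (l - d.+1)%N%:Z) = k%:Z - d%:Z); last by rewrite /n /r; lia.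
rewrite (_ : n%:Z - (r - (l - d)%N%:Z) = k%:Z + 1 - d%:Z); last by rewrite /n /r; lia.
by rewrite -mulrN opprB.
Qed.
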